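(* Let $G$ be a finite $2$-group. Then $G$ is a $2$-closed group if and only if $G$ is cyclic or $G$ is a generalized quaternion group $Q_{2^n}$ for some $n\geq 3$.
   Context: Permutations act on the right. For $X\leq{\rm Sym}(\Omega)$, the $2$-closure of $X$ on $\Omega$ is $X^{(2),\Omega}=\{\theta\in{\rm Sym}(\Omega)\mid \forall \alpha,\beta\in\Omega\ \exists g\in X:\ \alpha^\theta=\alpha^g,\ \beta^\theta=\beta^g\}$. An abstract group $G$ is called a $2$-closed group if $H=H^{(2),\Omega}$ for every set $\Omega$ and every subgroup $H\leq{\rm Sym}(\Omega)$ with $H\cong G$. $Q_{2^n}$ denotes the generalized quaternion group of order $2^n$. *)

From mathcomp Require Import all_boot all_fingroup all_solvable.
Set Implicit Arguments. Unset Strict Implicit. Unset Printing Implicit Defensive.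
Local Open Scope group_scope.

(* A subgroup H <= Sym(Omega) isomorphic to G is represented as the image of a
   faithful (injective) permutation representation rho of G on Omega.
   Permutations act on the right: a^(xy) = (a^x)^y, i.e. rho (x*y) = rho y \o rho x. *)
Definition faithful_perm_rep (gT : finGroupType) (G : {set gT})
    (Omega : Type) (rho : gT -> Omega -> Omega) : Prop :=
  [/\ rho 1 = id,
      {in G &, forall x y, rho (x * y) = rho y \o rho x},
      {in G, forall x, bijective (rho x)} &
      {in G &, injective rho}].

Definition perm_image (gT : finGroupType) (G : {set gT})
    (Omega : Type) (rho : gT -> Omega -> Omega) : (Omega -> Omega) -> Prop :=
  fun theta => exists2 g, g \in G & theta = rho g.

Definition two_closure (Omega : Type) (X : (Omega -> Omega) -> Prop)
    : (Omega -> Omega) -> Prop :=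
  fun theta => bijective theta /\
    forall a b : Omega, exists2 g, X g & theta a = g a /\ theta b = g b.

Definition two_closed_group (gT : finGroupType) (G : {set gT}) : Prop :=
  forall (Omega : Type) (rho : gT -> Omega -> Omega),
    faithful_perm_rep G rho ->
    forall theta : Omega -> Omega,
      two_closure (perm_image G rho) theta <-> perm_image G rho theta.

From mathcomp Require Import all_boot all_fingroup all_solvable.
From Stdlib Require Import FunctionalExtensionality Classical.
Set Implicit Arguments. Unset Strict Implicit. Unset Printing Implicit Defensive.
Local Open Scope group_scope.

(* A 2-group is 2-closed exactly when it has at most one involution, i.e. when
   |Ohm_1(G)| <= 2, which characterises the cyclic and generalized quaternion
   2-groups (prime_Ohm1P).  If |Ohm_1(G)| <= p, every nontrivial subgroup of the
   p-group G contains Ohm_1(G), so a point moved by Ohm_1(G) has a trivial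
   stabiliser; a permutation agreeing with G on every pair of points is then the
   element of G it agrees with at that point.  Conversely, two involutions yield a
   faithful action of G on a disjoint union of coset spaces G/H_i and a
   permutation acting on each G/H_i as some t_i in G which is in the 2-closure but
   not in G: for a noncentral involution b take G/<b> and G/[N, G], N the normal
   closure of b (b is not in [N, G] as G is nilpotent), with t = (b, 1); for two
   central involutions a <> c take G/<a>, G/<c>, G/<ac> with t = (1, 1, a). *)

Section PermRep.
Variables (gT : finGroupType) (G : {group gT}) (Omega : Type).
Variable rho : gT -> Omega -> Omega.

Lemma two_closure_sub_image_regular (a : Omega) :
    {in G &, forall g h, rho g a = rho h a -> g = h} ->
  forall theta, two_closure (perm_image G rho) theta -> perm_image G rho theta.
Proof.
move=> reg_a theta [_ agree2].
have [_ [g0 Gg0 ->] [theta_a _]] := agree2 a a.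
exists g0 => //; apply: functional_extensionality => b.
have [_ [g Gg ->] [theta_a' ->]] := agree2 a b.
by rewrite (reg_a g g0) // -theta_a' theta_a.
Qed.

Hypothesis rho_rep : faithful_perm_rep G rho.

Lemma perm_image_sub_two_closure theta :
  perm_image G rho theta -> two_closure (perm_image G rho) theta.
Proof.
have [_ _ rhoB _] := rho_rep; case=> g Gg ->; split=> [|a b]; first exact: rhoB.
by exists (rho g); first exists g.
Qed.

Lemma rep_fixed_divg g h a :
  g \in G -> h \in G -> rho g a = rho h a -> rho (g * h^-1) a = a.
Proof.
have [rho1 rhoM _ _] := rho_rep.
move=> Gg Gh gh_a; rewrite rhoM ?groupV //= gh_a.
by rewrite -[rho h^-1 _]/((rho h^-1 \o rho h) a) -rhoM ?groupV // mulgV rho1.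
Qed.

Lemma rep_fixed_expg k a m : k \in G -> rho k a = a -> rho (k ^+ m) a = a.
Proof.
have [rho1 rhoM _ _] := rho_rep.
move=> Gk k_a; elim: m => [|m IHm]; first by rewrite rho1.
by rewrite expgSr rhoM ?groupX //= IHm.
Qed.

Lemma rep_moves_nontrivial x : x \in G -> x != 1 -> exists a, rho x a <> a.
Proof.
have [rho1 _ _ rho_inj] := rho_rep.
move=> Gx ntx; apply: NNPP => fix_x; case/eqP: ntx.
apply: rho_inj; rewrite ?group1 // rho1.
by apply: functional_extensionality => a; apply: NNPP => x_a; apply: fix_x; exists a.
Qed.

End PermRep.

Lemma Ohm1_sub_cycle (p : nat) (gT : finGroupType) (G : {group gT}) x :
    p.-group G -> #|'Ohm_1(G)| <= p -> x \in G -> x != 1 ->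
  'Ohm_1(G) \subset <[x]>.
Proof.
move=> pG oG1 Gx ntx; have sxG : <[x]> \subset G by rewrite cycle_subG.
have ox1 : #|'Ohm_1(<[x]>)| = p.
  by rewrite (Ohm1_cyclic_pgroup_prime (cycle_cyclic x) (pgroupS sxG pG)) ?cycle_eq1.
suff <-: 'Ohm_1(<[x]>) = 'Ohm_1(G) by apply: Ohm_sub.
by apply/eqP; rewrite eqEcard OhmS // ox1.
Qed.

Lemma two_closed_of_Ohm1 (p : nat) (gT : finGroupType) (G : {group gT}) :
  p.-group G -> #|'Ohm_1(G)| <= p -> two_closed_group G.
Proof.
move=> pG oG1 Omega rho rho_rep theta; split; last exact: perm_image_sub_two_closure.
have [G1 | ntG] := eqsVneq G 1.
  case=> _ agree2; exists 1; first exact: group1.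
  have [rho1 _ _ _] := rho_rep; rewrite rho1; apply: functional_extensionality => b.
  have [_ [g Gg ->] [-> _]] := agree2 b b.
  by move: Gg; rewrite G1 => /set1P->; rewrite rho1.
have [z Oz ntz] : exists2 z, z \in 'Ohm_1(G) & z != 1 by apply/trivgPn; rewrite Ohm1_eq1.
have Gz := subsetP (Ohm_sub 1 G) z Oz.
have [a z_a] := rep_moves_nontrivial rho_rep Gz ntz.
apply: (two_closure_sub_image_regular (a := a)) => g h Gg Gh gh_a.
apply/divg1_eq; have [// | ntk] := eqVneq (g * h^-1) 1; case: z_a.
have Gk : g * h^-1 \in G by rewrite groupM ?groupV.
have /cycleP[m ->] := subsetP (Ohm1_sub_cycle pG oG1 Gk ntk) z Oz.
exact: (rep_fixed_expg rho_rep m Gk (rep_fixed_divg rho_rep Gg Gh gh_a)).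
Qed.

Section CosetUnion.
Variables (gT : finGroupType) (G : {group gT}) (I : eqType) (H : I -> {group gT}).

Definition coset_point := {p : I * {set gT} | p.2 \in rcosets (H p.1) G}.

Definition coset_act (g : gT) (p : coset_point) : coset_point :=
  insubd p ((val p).1, (val p).2 :* g).

Lemma coset_act_val g p :
  g \in G -> val (coset_act g p) = ((val p).1, (val p).2 :* g).
Proof.
move=> Gg; rewrite /coset_act insubdK //=.
have /rcosetsP[x Gx ->] := valP p.
by rewrite -rcosetM; apply/rcosetsP; exists (x * g); rewrite ?groupM.
Qed.

Fact base_coset_subproof i : (H i : {set gT}) \in rcosets (H i) G.
Proof. by apply/rcosetsP; exists 1; rewrite ?rcoset1. Qed.

Definition base_coset (i : I) : coset_point :=
  Sub (i, H i : {set gT}) (base_coset_subproof i).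

Lemma coset_act1 : coset_act 1 = id.
Proof.
apply: functional_extensionality => p; apply: val_inj.
by rewrite coset_act_val // rcoset1 -surjective_pairing.
Qed.

Lemma coset_actM : {in G &, forall x y, coset_act (x * y) = coset_act y \o coset_act x}.
Proof.
move=> x y Gx Gy; apply: functional_extensionality => p; apply: val_inj.
by rewrite /= !coset_act_val ?groupM // rcosetM.
Qed.

Lemma coset_actK x : x \in G -> cancel (coset_act x) (coset_act x^-1).
Proof.
move=> Gx p; rewrite -[coset_act _ (_ _)]/((coset_act x^-1 \o coset_act x) p).
by rewrite -coset_actM ?groupV // mulgV coset_act1.
Qed.

Lemma coset_act_bij : {in G, forall x, bijective (coset_act x)}.
Proof.
move=> x Gx; exists (coset_act x^-1); first exact: coset_actK.
by rewrite -{2}[x]invgK; apply: coset_actK; rewrite groupV.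
Qed.

Lemma coset_point_base p :
  exists i, exists2 x, x \in G & p = coset_act x (base_coset i).
Proof.
have /rcosetsP[x Gx Ep] := valP p; exists (val p).1, x => //.
by apply: val_inj; rewrite coset_act_val //= -Ep -surjective_pairing.
Qed.

Lemma coset_act_base_eq i j x y : x \in G -> y \in G ->
  coset_act x (base_coset i) = coset_act y (base_coset j) <->
  i = j /\ x * y^-1 \in H i.
Proof.
move=> Gx Gy; split=> [/(congr1 val) | [<- Hxy]].
  rewrite !coset_act_val //= => -[<- eq_xy].
  by rewrite -mem_rcoset -eq_xy rcoset_refl.
apply: val_inj; rewrite !coset_act_val //=; congr (_, _).
by apply/rcoset_eqP; rewrite mem_rcoset.
Qed.

Lemma coset_act_agree i x g t : x \in G -> g \in G -> t \in G ->
  coset_act g (coset_act x (base_coset i)) = coset_act t (coset_act x (base_coset i)) <->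
  g * t^-1 \in H i :^ x.
Proof.
move=> Gx Gg Gt; rewrite -![coset_act _ (coset_act x _)]/((_ \o coset_act x) _).
rewrite -!coset_actM //.
apply: iff_trans (coset_act_base_eq i i (groupM Gx Gg) (groupM Gx Gt)) _.
by rewrite mem_conjg conjgE invgK invMg !mulgA; split=> [[] | ].
Qed.

Lemma coset_act_faithful :
  {in G, forall x, (forall i, x \in H i) -> x = 1} -> faithful_perm_rep G coset_act.
Proof.
move=> trivI; split; [exact: coset_act1 | exact: coset_actM | exact: coset_act_bij |].
move=> x y Gx Gy eq_xy; apply/divg1_eq/trivI => [|i]; first by rewrite groupM ?groupV.
have /(coset_act_base_eq i i Gx Gy)[] // :
  coset_act x (base_coset i) = coset_act y (base_coset i) by rewrite eq_xy.
Qed.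

(* By coset_act_agree, [g * (t i)^-1 \in H i :^ x] says that g and [t i] move
   the point [H i :* x] alike: the permutation acting as [t i] on each coset space
   is in the 2-closure of G but is not induced by G. *)
Lemma not_two_closed_coset_union (t : I -> gT) :
    (forall i, t i \in G) ->
    {in G, forall x, (forall i, x \in H i) -> x = 1} ->
    (forall i j, i != j -> {in G &, forall x y, exists2 g, g \in G &
       g * (t i)^-1 \in H i :^ x /\ g * (t j)^-1 \in H j :^ y}) ->
    ~ (exists2 g, g \in G & forall i, {in G, forall x, g * (t i)^-1 \in H i :^ x}) ->
  ~ two_closed_group G.
Proof.
move=> Gt trivI agree2 not_agree closedG.
pose theta p := coset_act (t (val p).1) p.
have theta_base i x : x \in G ->
    theta (coset_act x (base_coset i)) = coset_act (t i) (coset_act x (base_coset i)).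
  by move=> Gx; rewrite /theta coset_act_val.
have [g Gg theta_g] : perm_image G coset_act theta.
  apply/(closedG _ _ (coset_act_faithful trivI)); split.
    exists (fun p => coset_act (t (val p).1)^-1 p) => p; rewrite /theta.
      by rewrite coset_act_val ?coset_actK.
    by rewrite coset_act_val ?groupV // -{1}[t _]invgK coset_actK ?groupV.
  move=> p q; have [i [x Gx ->]] := coset_point_base p.
  have [j [y Gy ->]] := coset_point_base q; rewrite !theta_base //.
  have [<- | neq_ij] := eqVneq i j; first by exists (coset_act (t i)); first exists (t i).
  have [h Gh [hx hy]] := agree2 i j neq_ij x y Gx Gy.
  exists (coset_act h); first by exists h.
  by split; symmetry; apply/coset_act_agree.
apply: not_agree; exists g => // i x Gx; apply/(coset_act_agree i Gx Gg (Gt i)).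
by rewrite -theta_g theta_base.
Qed.

End CosetUnion.

Lemma mem_cycle_involution (gT : finGroupType) (u x : gT) :
  #[u] = 2 -> x \in <[u]> -> x = 1 \/ x = u.
Proof. by move=> ou; rewrite cycle2g // !inE => /orP[] /eqP; [left | right]. Qed.

Lemma nil_notin_comm_normal_closure (gT : finGroupType) (G : {group gT}) b :
  nilpotent G -> b \in G -> b != 1 -> b \notin [~: <<b ^: G>>, G].
Proof.
move=> nilG Gb ntb; set N := <<b ^: G>>.
have sNG : N \subset G by rewrite gen_subG class_subG.
have ntN : N != 1.
  apply: contraNneq ntb => N1; have: b \in N by rewrite mem_gen ?class_refl.
  by rewrite N1 inE.
have nNG : G \subset 'N_G(N).
  by rewrite subsetI subxx (subset_trans (class_norm b G)) ?norm_gen.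
apply: contraL (nil_comm_properl nilG sNG ntN nNG) => bB.
rewrite properE negb_and negbK; apply/orP; right.
rewrite gen_subG; apply/subsetP => _ /imsetP[x Gx ->].
by rewrite memJ_norm // (subsetP (commg_normr G N)).
Qed.

Lemma not_two_closed_noncentral_involution (gT : finGroupType) (G : {group gT}) b :
  nilpotent G -> b \in G -> #[b] = 2 -> b \notin 'Z(G) -> ~ two_closed_group G.
Proof.
move=> nilG Gb ob notZb; set B := [~: <<b ^: G>>, G].
have notBb : b \notin B by rewrite nil_notin_comm_normal_closure // -order_gt1 ob.
have invb : b^-1 = b by rewrite invg_expg ob expg1.
have nBG : {in G, normalised B} by apply/normsP/commg_normr.
have [x0 Gx0 /cent1P ncx0] : exists2 x0, x0 \in G & x0 \notin 'C[b].
  by apply/subsetPn; move: notZb; rewrite inE Gb -sub_cent1.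
(* [~ x, b] acts as b on the coset <[b]> :* x and trivially on G/B. *)
have agree_xy x y : x \in G -> y \in G ->
    exists2 g, g \in G & g * b^-1 \in <[b]> :^ x /\ g * 1^-1 \in B :^ y.
  move=> Gx Gy; exists [~ x, b]; first by rewrite groupM ?groupV ?groupJ.
  rewrite commgEr mulgK memJ_conjg groupV cycle_id invg1 mulg1 nBG //.
  by split=> //; rewrite -commgEr /B commGC mem_commg ?mem_gen ?class_refl.
apply: (not_two_closed_coset_union (H := fun i => if i then <[b]>%G else [group of B])
  (t := fun i => if i then b else 1)).
- by case.
- move=> x Gx Hx; have /(mem_cycle_involution ob)[// | xb] := Hx true.
  by have := Hx false; rewrite /= xb (negPf notBb).
- case=> [] [] // _ x y Gx Gy.
  by have [g Gg []] := agree_xy y x Gy Gx; exists g.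
case=> g Gg /= agree_g; have /= := agree_g false 1 (group1 G).
rewrite conjsg1 invg1 mulg1 => Bg.
have /(mem_cycle_involution ob)[g1 | gb] : g \in <[b]>; last by rewrite -gb Bg in notBb.
  by have := agree_g true 1 (group1 G); rewrite /= conjsg1 groupMr ?groupV ?cycle_id.
have := agree_g true x0 Gx0; rewrite /= g1 mul1g invb -cycleJ cycle2g ?orderJ // !inE.
by rewrite -order_eq1 ob => /eqP/esym/conjg_fixP/commgP/esym.
Qed.

Lemma not_two_closed_central_involutions (gT : finGroupType) (G : {group gT}) a c :
  a \in 'Z(G) -> c \in 'Z(G) -> #[a] = 2 -> #[c] = 2 -> a != c -> ~ two_closed_group G.
Proof.
move=> Za Zc oa oc neq_ac.
have [Ga Gc] : a \in G /\ c \in G by rewrite !(subsetP (center_sub G)).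
have cac : commute a c by case/centerP: Zc => _ cGc; apply/esym/cGc.
have inva : a^-1 = a by rewrite invg_expg oa expg1.
have invc : c^-1 = c by rewrite invg_expg oc expg1.
have oac : #[a * c] = 2.
  apply/(prime_nt_dvdP (isT : prime 2)); first by rewrite order_eq1 -invc -eq_mulgV1.
  by rewrite order_dvdn expgMn // -{1}oa -oc !expg_order mulg1.
have conj_central z : z \in 'Z(G) -> {in G, normalised <[z]>}.
  move=> Zz; apply/normsP/cents_norm; rewrite centsC cycle_subG.
  by move: Zz; rewrite inE => /andP[].
have Zac : a * c \in 'Z(G) by rewrite groupM.
pose H (i : option bool) :=
  if i is Some ci then (if ci then <[a]>%G else <[c]>%G) else <[a * c]>%G.
pose t (i : option bool) := if i is Some _ then 1 else a.
have meet_ac x : x \in <[a]> -> x \in <[c]> -> x = 1.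
  move=> /(mem_cycle_involution oa)[// | ->] /(mem_cycle_involution oc)[a1 | ac].
    by move: oa; rewrite a1 order1.
  by rewrite ac eqxx in neq_ac.
apply: (not_two_closed_coset_union (H := H) (t := t)).
- by case=> [[]|]; rewrite /t ?group1.
- by move=> x Gx Hx; apply: meet_ac; [apply: (Hx (Some true)) | apply: (Hx (Some false))].
- move=> i j neq_ij x y Gx Gy; have conjH k w : w \in G -> H k :^ w = H k.
    by case: k => [[]|] /= Gw; apply: conj_central.
  rewrite !conjH //; case: i j neq_ij => [[]|] [[]|] //= _;
    [exists 1 | exists a | exists 1 | exists c | exists a | exists c];
    rewrite ?invg1 ?mulg1 ?mulgV ?inva -?cac ?group1 ?cycle_id //.
case=> g Gg agree_g; have := agree_g (Some true) 1 (group1 G).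
have := agree_g (Some false) 1 (group1 G); have := agree_g None 1 (group1 G).
rewrite /= !conjsg1 invg1 !mulg1 => Hac Hc Ha.
move: Hac; rewrite (meet_ac g Ha Hc) mul1g inva => /(mem_cycle_involution oac)[a1 | /eqP].
  by move: oa; rewrite a1 order1.
by rewrite -{1}[a]mulg1 (inj_eq (mulgI a)) eq_sym -order_eq1 oc.
Qed.

Lemma unique_involution_of_two_closed (gT : finGroupType) (G : {group gT}) :
    nilpotent G -> two_closed_group G ->
  {in G &, forall u v, #[u] = 2 -> #[v] = 2 -> u = v}.
Proof.
move=> nilG closedG u v Gu Gv ou ov; have [// | neq_uv] := eqVneq u v; exfalso.
have [Zu | notZu] := boolP (u \in 'Z(G)); last first.
  exact: not_two_closed_noncentral_involution nilG Gu ou notZu closedG.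
have [Zv | notZv] := boolP (v \in 'Z(G)); last first.
  exact: not_two_closed_noncentral_involution nilG Gv ov notZv closedG.
exact: not_two_closed_central_involutions Zu Zv ou ov neq_uv closedG.
Qed.

Lemma Ohm1_le2_unique_involution (gT : finGroupType) (G : {group gT}) :
    2.-group G -> {in G &, forall u v, #[u] = 2 -> #[v] = 2 -> u = v} ->
  #|'Ohm_1(G)| <= 2.
Proof.
move=> pG uniq_inv; have [-> | ntG] := eqsVneq G 1; first by rewrite Ohm1 cards1.
have [_ dvd2G _] := pgroup_pdiv pG ntG.
have [z Gz oz] := Cauchy (isT : prime 2) dvd2G.
rewrite -oz orderE subset_leq_card // Ohm1Eprime gen_subG.
apply/subsetP => x /setIdP[Gx prime_x].
have := mem_p_elt pG Gx; rewrite /p_elt (pnatE _ prime_x) inE => /eqP ox.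
by rewrite (uniq_inv x z) ?cycle_id.
Qed.

Lemma cyclic_or_quaternion_Ohm1 (gT : finGroupType) (G : {group gT}) :
    2.-group G ->
  (cyclic G \/ exists2 n : nat, (3 <= n)%N & G \isog 'Q_(2 ^ n)) <->
  #|'Ohm_1(G)| <= 2.
Proof.
move=> pG; have [-> | ntG] := eqsVneq G 1.
  by split=> _; [rewrite Ohm1 cards1 | left; exact: cyclic1].
have ntG1 : 'Ohm_1(G) != 1 by rewrite Ohm1_eq1.
have [_ dvd2O _] := pgroup_pdiv (pgroupS (Ohm_sub 1 G) pG) ntG1.
have ->: (#|'Ohm_1(G)| <= 2) = (#|'Ohm_1(G)| == 2).
  by rewrite eqn_leq (dvdn_leq (cardG_gt0 _) dvd2O) andbT.
rewrite (sameP eqP (prime_Ohm1P pG ntG)) /=.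
split=> [[-> // | /quaternion_classP->] | /orP[|/eqP/quaternion_classP]].
- by rewrite orbT.
- by left.
by right.
Qed.

Theorem mainTheorem11 (gT : finGroupType) (G : {group gT}) :
  2.-group G ->
  (two_closed_group G <->
   cyclic G \/ exists2 n : nat, (3 <= n)%N & G \isog 'Q_(2 ^ n)).
Proof.
move=> pG; apply: iff_trans (iff_sym (cyclic_or_quaternion_Ohm1 pG)).
split=> [closedG | ]; last exact: two_closed_of_Ohm1.
exact: Ohm1_le2_unique_involution pG (unique_involution_of_two_closed (pgroup_nil pG) closedG).
Qed.
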